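(* Every nontrivial shadow has at least two distinct (necessarily edge-disjoint) straight-ahead cycles.
   Context: A shadow is either the trivial shadow (a vertexless simple closed curve in the plane) or the $4$-regular plane graph (loops and multiple edges allowed) obtained from a regular knot diagram by turning each crossing into a vertex; a nontrivial shadow is one with at least one vertex. At each vertex of a shadow the four edge-ends come in two opposite pairs (the two strands passing straight through the crossing). A walk is straight-ahead if, whenever it arrives at a vertex $v$ along an edge-end, it leaves $v$ along the opposite edge-end. A cycle of a graph is a connected subgraph all of whose vertices have degree $2$ in it (a vertexless closed curve also counts as a cycle). A cycle $C$ of a shadow $S$ is a straight-ahead cycle if there is a straight-ahead closed walk traversing each edge of $C$ exactly once. *)

(* Shadows are encoded as combinatorial maps (rotation systems). *)
From mathcomp Require Import all_boot all_fingroup.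
Set Implicit Arguments. Unset Strict Implicit. Unset Printing Implicit Defensive.

Section Shadow.
Variables (D : finType) (alpha sigma : {perm D}).
(* D     : darts = edge-ends (half-edges) of the graph;
   alpha : pairs the two ends of each edge (edges = alpha-orbits);
   sigma : rotation (cyclic order of edge-ends around each vertex in the
           plane embedding); vertices = sigma-orbits.
   At a vertex of degree 4 the edge-end opposite to d is sigma (sigma d). *)

Definition same_vertex (x y : D) : bool := fconnect sigma x y.

(* straight-ahead successor: arriving along edge-end d, leave along the
   opposite edge-end sigma (sigma d), and arrive at the other end of that edge *)
Definition sa_step (d : D) : D := alpha (sigma (sigma d)).

Definition face_step (d : D) : D := sigma (alpha d).

Definition nb_vertices := fcard sigma D.
Definition nb_edges := fcard alpha D.
Definition nb_faces := fcard face_step D.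

(* (D, alpha, sigma) is the shadow of a (one-component) regular knot diagram:
   a 4-regular graph embedded in the sphere/plane (genus 0 via Euler's formula
   for the connected map), whose straight-ahead traversal is a single closed
   curve (exactly two straight-ahead dart orbits: the two directions). *)
Definition is_shadow : Prop :=
  [/\ forall x, alpha (alpha x) = x /\ alpha x != x,
      forall x, fingraph.order sigma x = 4,
      forall x y, connect (fun a b => (b == alpha a) || (b == sigma a)) x y,
      (nb_vertices + nb_faces = nb_edges + 2)%N
    & fcard sa_step D = 2].

Definition nontrivial_shadow : Prop := (0 < #|D|)%N.

(* A set of darts C closed under alpha encodes a set of edges. *)
Definition edge_set (C : {set D}) : Prop := forall x, (alpha x \in C) = (x \in C).

(* C is a cycle: a nonempty connected subgraph in which every vertex has
   degree 2 (degree = number of edge-ends of C at the vertex, so a loop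
   counts twice). *)
Definition is_cycle (C : {set D}) : Prop :=
  [/\ edge_set C, C != set0,
      forall y, y \in C -> #|[set z in C | same_vertex y z]| = 2
    & forall x y, x \in C -> y \in C ->
        connect (fun a b => [&& a \in C, b \in C &
                               (b == alpha a) || same_vertex a b]) x y].

(* A closed straight-ahead walk, given as the nonempty list s of departure
   edge-ends of its successive edge traversals (traversal i goes from s_i to
   alpha s_i).  Straight-ahead: each intermediate arrival continues through
   the opposite edge-end; closed: the final arrival vertex is the starting
   vertex. *)
Definition sa_closed_walk (s : seq D) : Prop :=
  match s with
  | [::] => False
  | d0 :: s' =>
      path (fun d d' => d' == sigma (sigma (alpha d))) d0 s' /\
      same_vertex (alpha (last d0 s')) d0
  end.

Definition traverses_once (s : seq D) (C : {set D}) : Prop :=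
  all (fun d => d \in C) s /\
  forall x, x \in C -> count (fun d => (d == x) || (d == alpha x)) s = 1.

Definition straight_ahead_cycle (C : {set D}) : Prop :=
  is_cycle C /\ exists s, sa_closed_walk s /\ traverses_once s C.

End Shadow.

From mathcomp Require Import all_boot all_fingroup.
From mathcomp Require Import zify.
Set Implicit Arguments. Unset Strict Implicit. Unset Printing Implicit Defensive.

(* Straight-ahead traversal sa d = alpha (sigma^2 d) is injective and reversed
   by alpha, sa (alpha (sa d)) = alpha d, so no dart shares an sa-orbit with
   its alpha-partner; the two orbits of a shadow are the two directions of the
   knot.  The orbit of a dart d revisits the vertex of d at some other dart
   (sigma d or sigma^3 d), which cuts the orbit into two closed straight-ahead
   walks with disjoint arrivals.  Shortening each to a closed sub-walk whose
   arrival vertices are pairwise distinct gives a cycle in which every vertex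
   has degree 2 and which is traversed straight ahead; the two cycles differ
   because their arrivals are disjoint parts of one orbit. *)

Section ClosedWalks.
Variables (T : Type) (f : T -> T) (e : rel T).
Hypothesis e_sym : symmetric e.

Definition closed_walk x k := e (iter k f x) x.

Definition simple_walk x k :=
  forall i j, i < k -> j < k -> e (iter i.+1 f x) (iter j.+1 f x) -> i = j.

Lemma closed_walk_shorten x k : 0 < k -> closed_walk x k ->
  exists a l, [/\ a + l <= k, 0 < l, closed_walk (iter a f x) l
                & simple_walk (iter a f x) l].
Proof.
elim/ltn_ind: k x => k IHk x k_gt0 closed_xk.
have [/existsP[i /existsP[j /andP[lt_ij e_ij]]] | not_repeat] :=
  boolP [exists i : 'I_k, exists j : 'I_k,
           (i < j) && e (iter i.+1 f x) (iter j.+1 f x)].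
  have closed_ij : closed_walk (iter i.+1 f x) (j - i).
    rewrite /closed_walk -iterD e_sym.
    by have -> : j - i + i.+1 = j.+1 by lia.
  have lt_jk := ltn_ord j.
  have [||a [l [le_al l_gt0 closed_al simple_al]]] :=
    IHk (j - i) _ (iter i.+1 f x) _ closed_ij; rewrite ?subn_gt0 //; first lia.
  by exists (a + i.+1), l; rewrite iterD; split => //; lia.
exists 0, k; split => // i j lt_ik lt_jk e_ij.
have no_repeat i' j' : i' < k -> j' < k -> i' < j' ->
    e (iter i'.+1 f x) (iter j'.+1 f x) = false.
  move=> lt_i'k lt_j'k lt_i'j'; apply: contraNF not_repeat => e_i'j'.
  by apply/existsP; exists (Ordinal lt_i'k); apply/existsP; exists (Ordinal lt_j'k);
    rewrite /= lt_i'j'.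
case: (ltngtP i j) => // [lt_ij | lt_ji].
  by rewrite no_repeat in e_ij.
by rewrite e_sym no_repeat in e_ij.
Qed.

Lemma closed_walk_complement x n k :
  iter n f x = x -> k <= n -> closed_walk x k -> closed_walk (iter k f x) (n - k).
Proof. by move=> iter_n le_kn; rewrite /closed_walk -iterD subnK // iter_n e_sym. Qed.

End ClosedWalks.

Section FourRegularMap.
Variables (D : finType) (alpha sigma : {perm D}).
Hypotheses (alphaK : involutive alpha) (alpha_neq : forall d, alpha d != d).
Hypothesis order_sigma : forall d, fingraph.order sigma d = 4.

Local Notation sa := (sa_step alpha sigma).
Local Notation sv := (same_vertex sigma).

Lemma iter_sigma_neq i d : 0 < i < 4 -> iter i sigma d != d.
Proof.
case/andP=> i_gt0 lt_i4; apply: contraTneq i_gt0 => iter_id.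
by have := findex_iter (f := sigma) (x := d) (i := i);
  rewrite order_sigma iter_id findex0 => <-.
Qed.

Lemma sigma4 d : iter 4 sigma d = d.
Proof. by rewrite -(order_sigma d) iter_order //; apply: perm_inj. Qed.

Lemma same_vertex_refl d : sv d d.
Proof. exact: connect0. Qed.

Lemma same_vertex_sym : symmetric sv.
Proof. by move=> d d'; apply: fconnect_sym; apply: perm_inj. Qed.

Lemma same_vertex_sigma2 d : sv d (sigma (sigma d)).
Proof. exact: (fconnect_iter _ 2). Qed.

Lemma same_vertex_sigma2r d' d : sv d' (sigma (sigma d)) = sv d' d.
Proof. exact/esym/(same_connect_r same_vertex_sym (same_vertex_sigma2 d)). Qed.

Lemma sa_inj : injective sa.
Proof. by move=> d d' /perm_inj/perm_inj/perm_inj. Qed.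

Lemma alpha_sa d : alpha (sa d) = sigma (sigma d).
Proof. exact: alphaK. Qed.

Lemma alpha_iterS_sa i d : alpha (iter i.+1 sa d) = sigma (sigma (iter i sa d)).
Proof. by rewrite iterS alpha_sa. Qed.

Lemma sa_alpha_sa d : sa (alpha (sa d)) = alpha d.
Proof. by rewrite alpha_sa /sa_step -[d in RHS](sigma4 d). Qed.

Lemma alpha_neq_iter_sa j d : alpha d != iter j sa d.
Proof.
elim/ltn_ind: j d => -[_ d | [_ d | j IHj d]]; first exact: alpha_neq.
  by rewrite (inj_eq perm_inj) eq_sym (iter_sigma_neq (i := 2)).
apply: contra (IHj j (ltnW (ltnSn _)) (sa d)) => /eqP alpha_d.
by apply/eqP/sa_inj; rewrite sa_alpha_sa alpha_d -iterSr iterS.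
Qed.

Lemma fconnect_sa_alpha d d' : fconnect sa d d' -> fconnect sa d (alpha d') = false.
Proof.
move=> dd'; apply/negP => d_alpha.
have d'_alpha : fconnect sa d' (alpha d').
  by apply: connect_trans d_alpha; rewrite fconnect_sym //; apply: sa_inj.
by have := alpha_neq_iter_sa (findex sa d' (alpha d')) d'; rewrite iter_findex // eqxx.
Qed.

Lemma alpha_iter_sa_neq i j d : alpha (iter i sa d) != iter j sa d.
Proof.
apply/eqP => alpha_ij.
by have := fconnect_sa_alpha (fconnect_iter sa i d); rewrite alpha_ij fconnect_iter.
Qed.

(* The walk entering the vertex of d along d and going straight ahead for k
   edges; its i-th edge is traversed from alpha a to a, a its i-th arrival. *)
Definition arrivals d k := traject sa (sa d) k.

Definition walk_edges d k : {set D} :=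
  [set d' | (d' \in arrivals d k) || (alpha d' \in arrivals d k)].

Lemma arrivalsP d k d' :
  reflect (exists2 i, i < k & d' = iter i.+1 sa d) (d' \in arrivals d k).
Proof. by apply: (iffP trajectP) => -[i lt_ik ->]; exists i; rewrite ?iterSr. Qed.

Lemma arrivalsD d k l :
  arrivals d (k + l) = arrivals d k ++ arrivals (iter k sa d) l.
Proof. by rewrite /arrivals trajectD -iterSr iterS. Qed.

Lemma arrivals_iter_sub d a k l :
  a + l <= k -> arrivals (iter a sa d) l \subset arrivals d k.
Proof.
move=> le_alk; apply/subsetP => d' /arrivalsP[i lt_il ->]; apply/arrivalsP.
by exists (i + a); [lia | rewrite -iterD].
Qed.

Lemma arrivals_order_uniq d : uniq (arrivals d (fingraph.order sa d)).
Proof.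
have map_traject k d0 : map sa (traject sa d0 k) = traject sa (sa d0) k.
  by elim: k d0 => //= k IHk d0; rewrite IHk.
by rewrite /arrivals -map_traject (map_inj_uniq sa_inj) orbit_uniq.
Qed.

Lemma mem_walk_edges_arrival d k i : i < k -> iter i.+1 sa d \in walk_edges d k.
Proof. by move=> lt_ik; rewrite inE; apply/orP; left; apply/arrivalsP; exists i. Qed.

Lemma mem_walk_edges_departure d k i :
  i < k -> alpha (iter i.+1 sa d) \in walk_edges d k.
Proof.
by move=> lt_ik; rewrite inE alphaK; apply/orP; right; apply/arrivalsP; exists i.
Qed.

Section SimpleClosedWalk.
Variables (d : D) (k : nat).
Hypotheses (k_gt0 : 0 < k) (closed : closed_walk sa sv d k).
Hypothesis simple : simple_walk sa sv d k.

Local Notation C := (walk_edges d k).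

Lemma same_vertex_arrivals p j : 0 < p <= k -> 0 < j <= k ->
  sv (iter p sa d) (iter j sa d) = (p == j).
Proof.
move=> p_range j_range; apply/idP/eqP => [|->]; last exact: same_vertex_refl.
by case: p j p_range j_range => // p [] // j /= le_pk le_jk /simple ->.
Qed.

(* Departure i leaves from the vertex of arrival i, and departure 0 from that
   of the last arrival k. *)
Lemma same_vertex_walk p i : 0 < p <= k -> i < k ->
  sv (iter p sa d) (iter i sa d) = (i == p %% k).
Proof.
move=> p_range lt_ik.
have sv_start : sv (iter p sa d) d = (p == k).
  rewrite -same_vertex_arrivals ?k_gt0 ?leqnn //.
  exact/esym/(same_connect_r same_vertex_sym closed).
have [eq_pk | ne_pk] := eqVneq p k; last rewrite modn_small; last first.
- by rewrite ltn_neqAle ne_pk; case/andP: p_range.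
- case: i lt_ik => [|i] lt_ik.
    rewrite /= sv_start (negbTE ne_pk) eq_sym.
    by case/andP: p_range => /lt0n_neq0/negbTE.
  by rewrite same_vertex_arrivals ?lt_ik ?(ltnW lt_ik) // eq_sym.
- subst p; rewrite modnn; case: i lt_ik => [|i] lt_ik; first by rewrite /= sv_start eqxx.
  by rewrite same_vertex_arrivals ?(ltnW lt_ik) ?gtn_eqF.
Qed.

Lemma vertex_of_walk_edge z :
  z \in C -> exists2 p, 0 < p <= k & sv (iter p sa d) z.
Proof.
rewrite inE => /orP[/arrivalsP[i lt_ik ->] | /arrivalsP[i lt_ik alpha_z]].
  by exists i.+1 => //; exact: same_vertex_refl.
have -> : z = sigma (sigma (iter i sa d)) by rewrite -alpha_iterS_sa -alpha_z alphaK.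
case: i lt_ik {alpha_z} => [|i] lt_ik.
  have k_range : 0 < k <= k by rewrite k_gt0 leqnn.
  by exists k; rewrite // same_vertex_sigma2r (same_vertex_walk k_range k_gt0) modnn.
exists i.+1; first exact: ltnW.
by rewrite same_vertex_sigma2r same_vertex_walk ?modn_small ?(ltnW lt_ik).
Qed.

Lemma walk_edges_at_vertex p : 0 < p <= k ->
  [set z in C | sv (iter p sa d) z] =
    [set iter p sa d; alpha (iter (p %% k).+1 sa d)].
Proof.
move=> p_range; have lt_pk : p %% k < k by rewrite ltn_pmod.
apply/setP => z; rewrite in_set2 in_set; apply/andP/orP.
  case; rewrite inE => /orP[/arrivalsP[i lt_ik ->] | /arrivalsP[i lt_ik alpha_z]] sv_z.
    by left; rewrite same_vertex_arrivals // in sv_z; rewrite (eqP sv_z).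
  right; move: sv_z; rewrite -(alphaK z) alpha_z alpha_iterS_sa same_vertex_sigma2r.
  by rewrite same_vertex_walk // alpha_iterS_sa => /eqP->.
case=> /eqP->.
  case: p p_range {lt_pk} => // p p_range.
  by split; [exact: mem_walk_edges_arrival | exact: same_vertex_refl].
split; first exact: mem_walk_edges_departure.
by rewrite alpha_iterS_sa same_vertex_sigma2r same_vertex_walk.
Qed.

Lemma walk_edges_degree z : z \in C -> #|[set z' in C | sv z z']| = 2.
Proof.
move=> zC; have [p p_range sv_pz] := vertex_of_walk_edge zC.
have -> : [set z' in C | sv z z'] = [set z' in C | sv (iter p sa d) z'].
  by apply/setP => z'; rewrite !inE /same_vertex (same_connect same_vertex_sym sv_pz).
by rewrite walk_edges_at_vertex // cards2 eq_sym alpha_iter_sa_neq.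
Qed.

Lemma walk_edges_connected z z' : z \in C -> z' \in C ->
  connect (fun a b => [&& a \in C, b \in C & (b == alpha a) || sv a b]) z z'.
Proof.
set adj := fun a b => _.
have adj_sym : symmetric adj.
  move=> a b; rewrite /adj andbCA same_vertex_sym.
  by congr [&& _, _ & _ || _]; apply/eqP/eqP => ->.
have from_start i : i < k ->
    connect adj (iter 1 sa d) (iter i.+1 sa d) /\
    connect adj (iter 1 sa d) (alpha (iter i.+1 sa d)).
  elim: i => [|i IHi] lt_ik.
    split; first exact: connect0.
    apply: connect1.
    by rewrite /adj mem_walk_edges_arrival ?mem_walk_edges_departure ?eqxx.
  have [to_arrival _] := IHi (ltnW lt_ik).
  have to_departure : connect adj (iter 1 sa d) (alpha (iter i.+2 sa d)).
    apply: connect_trans to_arrival (connect1 _).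
    rewrite /adj mem_walk_edges_arrival ?mem_walk_edges_departure ?(ltnW lt_ik) //.
    by rewrite alpha_iterS_sa same_vertex_sigma2r same_vertex_refl orbT.
  split => //; apply: connect_trans to_departure (connect1 _).
  by rewrite /adj mem_walk_edges_arrival ?mem_walk_edges_departure ?alphaK ?eqxx.
have from_start_C w : w \in C -> connect adj (iter 1 sa d) w.
  rewrite inE => /orP[/arrivalsP[i lt_ik ->] | /arrivalsP[i lt_ik alpha_w]].
    by case: (from_start i lt_ik).
  by rewrite -(alphaK w) alpha_w; case: (from_start i lt_ik).
move=> zC z'C; apply: connect_trans (from_start_C z' z'C).
by rewrite (sym_connect_sym adj_sym); apply: from_start_C.
Qed.

Lemma sa_closed_walk_departures :
  sa_closed_walk alpha sigma (map alpha (arrivals d k)).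
Proof.
have departures_path n w : path (fun a b => b == sigma (sigma (alpha a)))
    (alpha w) (map alpha (traject sa (sa w) n)).
  by elim: n w => //= n IHn w; rewrite IHn alphaK alpha_sa eqxx.
case: k k_gt0 closed => // k' _ closed'; split; first exact: departures_path.
by rewrite last_map alphaK last_traject -iterSr alpha_sa same_vertex_sigma2r.
Qed.

Lemma arrivals_uniq : uniq (arrivals d k).
Proof.
apply/(uniqP (sa d)) => i j; rewrite !inE size_traject => lt_ik lt_jk.
rewrite !nth_traject // -!iterSr => eq_ij.
by apply: simple; rewrite // eq_ij same_vertex_refl.
Qed.

Lemma traverses_once_departures :
  traverses_once alpha (map alpha (arrivals d k)) C.
Proof.
split.
  by rewrite all_map; apply/allP => w w_arr; rewrite /= inE alphaK w_arr orbT.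
move=> z zC; rewrite count_map.
have not_both : ~~ ((z \in arrivals d k) && (alpha z \in arrivals d k)).
  apply/andP => -[/arrivalsP[i _ ->] /arrivalsP[j _ alpha_ij]].
  by move: (alpha_iter_sa_neq i.+1 j.+1 d); rewrite alpha_ij eqxx.
rewrite (eq_count (a2 := predU (pred1 (alpha z)) (pred1 z))); last first.
  by move=> w; rewrite /= -{1}(alphaK z) !(inj_eq perm_inj).
have := count_predUI (pred1 (alpha z)) (pred1 z) (arrivals d k).
rewrite (eq_count (a1 := predI _ _) (a2 := pred0)); last first.
  move=> w /=; have [->|ne_wz] := eqVneq w z; last by rewrite andbF.
  by rewrite eq_sym (negbTE (alpha_neq z)).
rewrite count_pred0 addn0 => ->; rewrite !count_uniq_mem ?arrivals_uniq //.
by move: zC not_both; rewrite inE; case: (_ \in _); case: (_ \in _).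
Qed.

Lemma straight_ahead_cycle_walk_edges : straight_ahead_cycle alpha sigma C.
Proof.
split; last by exists (map alpha (arrivals d k)); split;
  [exact: sa_closed_walk_departures | exact: traverses_once_departures].
split; [| apply/set0Pn | exact: walk_edges_degree | exact: walk_edges_connected].
- by move=> z; rewrite !inE alphaK orbC.
- by exists (iter 1 sa d); apply: mem_walk_edges_arrival.
Qed.

End SimpleClosedWalk.

Lemma walk_edges_neq d n a1 l1 a2 l2 : uniq (arrivals d n) ->
  0 < l1 -> a1 + l1 <= a2 -> a2 + l2 <= n ->
  walk_edges (iter a1 sa d) l1 != walk_edges (iter a2 sa d) l2.
Proof.
move=> uniq_n l1_gt0 le_a2 le_n; apply/eqP => eq_C.
have disj : [disjoint arrivals (iter a1 sa d) l1 & arrivals (iter a2 sa d) l2].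
  move: uniq_n; rewrite -(subnKC (leq_trans (leq_addr l2 a2) le_n)) arrivalsD.
  rewrite cat_uniq disjoint_sym -disjoint_has => /and3P[_ disj _].
  apply: disjointW disj; last apply: arrivals_iter_sub; last lia.
  by apply: (@arrivals_iter_sub _ 0); lia.
have := mem_walk_edges_arrival (iter a1 sa d) l1_gt0.
rewrite eq_C inE => /orP[arr2 | /arrivalsP[j _ alpha_j]].
  have arr1 : iter 1 sa (iter a1 sa d) \in arrivals (iter a1 sa d) l1.
    by apply/arrivalsP; exists 0.
  by rewrite (disjointFr disj arr1) in arr2.
move: (alpha_iter_sa_neq a1.+1 (j.+1 + a2) d).
by rewrite iterD -[iter a1.+1 sa d]/(iter 1 sa (iter a1 sa d)) alpha_j eqxx.
Qed.

Section Shadow.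
Hypothesis two_orbits : fcard sa D = 2.

Lemma fconnect_sa_or_alpha d d' : fconnect sa d d' || fconnect sa (alpha d) d'.
Proof.
have sa_sym : connect_sym (frel sa) := fconnect_sym sa_inj.
apply/norP => -[not_dd' not_alpha_dd'].
have : 1 < fcard sa [predC fconnect sa d].
  apply/(fcard_gt1P sa_inj); first exact/predC_closed/connect_closed.
  exists (alpha d); first exact/negbT/(fconnect_sa_alpha (connect0 _ d)).
  by exists d'; rewrite ?inE.
have := n_compC (fconnect sa d) (frel sa).
by rewrite (n_comp_connect sa_sym) two_orbits; lia.
Qed.

Lemma orbit_revisits_vertex d :
  exists2 k, 0 < k < fingraph.order sa d & closed_walk sa sv d k.
Proof.
suff [y [dy ne_yd sv_yd]] : exists y, [/\ fconnect sa d y, y != d & sv y d].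
  exists (findex sa d y); last by rewrite /closed_walk iter_findex.
  by rewrite findex_max // lt0n findex_eq0 eq_sym ne_yd.
have [d_sd | ad_sd] := orP (fconnect_sa_or_alpha d (sigma d)).
  exists (sigma d); split => //; first exact: (iter_sigma_neq (i := 1)).
  by rewrite same_vertex_sym; apply: fconnect1.
exists (iter 3 sigma d); split; first last.
- by rewrite same_vertex_sym; apply: fconnect_iter.
- exact: iter_sigma_neq.
case/orP: (fconnect_sa_or_alpha d (iter 3 sigma d)) => // ad_s3d.
have := fconnect_sa_alpha ad_s3d; rewrite -/(sa (sigma d)).
by rewrite (connect_trans ad_sd (fconnect1 _ _)).
Qed.

Lemma two_straight_ahead_cycles : nontrivial_shadow D ->
  exists C1 C2 : {set D},
    [/\ C1 != C2, straight_ahead_cycle alpha sigma C1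
      & straight_ahead_cycle alpha sigma C2].
Proof.
case/card_gt0P => d _.
have [k /andP[k_gt0 lt_km] closed_dk] := orbit_revisits_vertex d.
have closed_rest := closed_walk_complement same_vertex_sym
  (iter_order sa_inj d) (ltnW lt_km) closed_dk.
have [a1 [l1 [le_a1 l1_gt0 closed1 simple1]]] :=
  closed_walk_shorten same_vertex_sym k_gt0 closed_dk.
have rest_gt0 : 0 < fingraph.order sa d - k by rewrite subn_gt0.
have [a2 [l2 [le_a2 l2_gt0 closed2 simple2]]] :=
  closed_walk_shorten same_vertex_sym rest_gt0 closed_rest.
rewrite -iterD in closed2 simple2.
exists (walk_edges (iter a1 sa d) l1), (walk_edges (iter (a2 + k) sa d) l2).
split; try exact: straight_ahead_cycle_walk_edges.
by apply: walk_edges_neq (arrivals_order_uniq d) _ _ _; lia.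
Qed.

End Shadow.
End FourRegularMap.

Theorem fact3p2 (D : finType) (alpha sigma : {perm D}) :
  is_shadow alpha sigma -> nontrivial_shadow D ->
  exists C1 C2 : {set D},
    [/\ C1 != C2, straight_ahead_cycle alpha sigma C1
      & straight_ahead_cycle alpha sigma C2].
Proof.
case=> alpha_inv order_sigma _ _ two_orbits.
have alphaK : involutive alpha by move=> d; case: (alpha_inv d).
have alpha_neq d : alpha d != d by case: (alpha_inv d).
exact: two_straight_ahead_cycles alphaK alpha_neq order_sigma two_orbits.
Qed.
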